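(* Every positively model-complete first-order theory $T$ is geometrically complete. In other words, if $A$ is a model of a positively model-complete theory $T$, $\bar x$ is a finite tuple of variables and $\pi$ is a finite $a$-type of $A[\bar x]$, then $tp_a^A(\pi(A))=\sqrt[T]{\pi}^{+}$.
   Context: A homomorphism preserves atomic sentences with parameters; it is an immersion if it reflects every positive existential (prenex existential, negation-free) sentence with parameters; $T$ is positively model-complete if every homomorphism between models of $T$ is an immersion. A quasi-algebraic formula has the form $\forall\bar y\,(\bigwedge\Phi\to\psi)$, $\Phi\cup\{\psi\}$ finite sets of atomic formulas; a homomorphism $f:A\to B$ is geometrically closed if it preserves every quasi-algebraic sentence with parameters from $A$ true in $A$; $T$ is geometrically complete if every model $A$ of $T$ is geometrically closed in $\mathrm{Mod}(T)$, i.e. every homomorphism from $A$ to a model of $T$ is geometrically closed. $T_\forall$ is the set of consequences of $T$ of the form $\forall\bar y(\bigwedge\Phi\to\bigvee\Psi)$, $\Phi,\Psi$ finite sets of atomic formulas. For a structure $C$, an $a$-type is a set of atomic $\mathscr L(C)$-sentences; it is closed if it contains all atomic $\mathscr L(C)$-sentences implied by $D^+C\cup\pi$; $C/\pi$ is the quotient by $c\sim c'$ iff $c=c'$ is so implied, relations holding exactly when implied; a closed $\pi$ is $T$-prime if $C/\pi\models T_\forall$, and $\sqrt[T]{\pi}^{+}$ is the intersection of all $T$-prime $a$-types containing $\pi$. $A[\bar x]$ is the $\mathscr L(A)$-structure freely generated over $A$ by $\bar x$ (quotient by $D^+A$ of the term algebra of $\mathscr L\sqcup A\sqcup\bar x$),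 so a finite $a$-type of $A[\bar x]$ is a finite set of atomic $\mathscr L(A)$-formulas in $\bar x$; $\pi(A)=\{\bar a\in A^{|\bar x|}:A\models\bigwedge\pi(\bar a)\}$; $tp_a^A(S)$ is the set of atomic $\mathscr L(A)$-formulas in $\bar x$ true in $A$ of every tuple of $S$. *)

From mathcomp Require Import all_boot.
Set Implicit Arguments. Unset Strict Implicit. Unset Printing Implicit Defensive.

Record language := Language {
  fsym : Type;                 (* function symbols (constants = arity 0) *)
  farity : fsym -> nat;
  rsym : Type;
  rarity : rsym -> nat }.

Section Syntax.
Variable L : language.

Inductive term : Type :=
  | TVar : nat -> term
  | TApp : forall f : fsym L, ('I_(farity f) -> term) -> term.

Inductive formula : Type :=
  | FTrue : formula
  | FFalse : formula
  | FEq : term -> term -> formula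
  | FRel : forall r : rsym L, ('I_(rarity r) -> term) -> formula
  | FNot : formula -> formula
  | FAnd : formula -> formula -> formula
  | FOr : formula -> formula -> formula
  | FImp : formula -> formula -> formula
  | FForall : nat -> formula -> formula
  | FExists : nat -> formula -> formula.

Definition atomic (phi : formula) : Prop :=
  match phi with FEq _ _ | FRel _ _ => True | _ => False end.

Inductive pos_qf : formula -> Prop :=
  | pqf_atomic phi : atomic phi -> pos_qf phi
  | pqf_true : pos_qf FTrue
  | pqf_false : pos_qf FFalse
  | pqf_and phi psi : pos_qf phi -> pos_qf psi -> pos_qf (FAnd phi psi)
  | pqf_or phi psi : pos_qf phi -> pos_qf psi -> pos_qf (FOr phi psi).

Inductive pos_ex : formula -> Prop :=
  | pex_qf phi : pos_qf phi -> pos_ex phi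
  | pex_ex x phi : pos_ex phi -> pos_ex (FExists x phi).

Definition bigAnd (Phi : seq formula) : formula := foldr FAnd FTrue Phi.
Definition foralls (ys : seq nat) (phi : formula) : formula := foldr FForall phi ys.

Definition quasi_algebraic (phi : formula) : Prop :=
  exists (ys : seq nat) (Phi : seq formula) (psi : formula),
    [/\ foldr (fun chi P => atomic chi /\ P) True Phi, atomic psi &
        phi = foralls ys (FImp (bigAnd Phi) psi)].

End Syntax.

Record structure (L : language) := Structure {
  dom :> Type;
  interp_f : forall f : fsym L, ('I_(farity f) -> dom) -> dom;
  interp_r : forall r : rsym L, ('I_(rarity r) -> dom) -> Prop }.

Section Semantics.
Variables (L : language) (A : structure L).

Fixpoint eval (v : nat -> A) (t : term L) : A :=
  match t with
  | TVar n => v n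
  | TApp f args => @interp_f L A f (fun i => eval v (args i))
  end.

Definition upd (v : nat -> A) (x : nat) (a : A) : nat -> A :=
  fun n => if n == x then a else v n.

Fixpoint sat (v : nat -> A) (phi : formula L) : Prop :=
  match phi with
  | FTrue => True
  | FFalse => False
  | FEq t s => eval v t = eval v s
  | FRel r args => @interp_r L A r (fun i => eval v (args i))
  | FNot p => ~ sat v p
  | FAnd p q => sat v p /\ sat v q
  | FOr p q => sat v p \/ sat v q
  | FImp p q => sat v p -> sat v q
  | FForall x p => forall a : A, sat (upd v x a) p
  | FExists x p => exists a : A, sat (upd v x a) p
  end.

End Semantics.

(* A theory is a set of first-order formulas (sentences); a model is a nonempty
   structure satisfying each of them (under every assignment, i.e. its universal closure). *)
Definition theory (L : language) := formula L -> Prop.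

Definition is_model (L : language) (T : theory L) (A : structure L) : Prop :=
  inhabited A /\ forall phi, T phi -> forall v : nat -> A, sat v phi.

(* Sentences with parameters from A are represented as formulas together with
   an assignment v of the free variables into A; their image under f : A -> B
   is the same formula with assignment f \o v. *)

Definition homomorphism (L : language) (A B : structure L) (f : A -> B) : Prop :=
  forall (phi : formula L) (v : nat -> A), atomic phi -> sat v phi -> sat (f \o v) phi.

Definition immersion (L : language) (A B : structure L) (f : A -> B) : Prop :=
  homomorphism f /\
  forall (phi : formula L) (v : nat -> A), pos_ex phi -> sat (f \o v) phi -> sat v phi.

Definition positively_model_complete (L : language) (T : theory L) : Prop :=
  forall (A B : structure L) (f : A -> B),
    is_model T A -> is_model T B -> homomorphism f -> immersion f.

Definition geometrically_closed (L : language) (A B : structure L) (f : A -> B) : Prop :=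
  homomorphism f /\
  forall (phi : formula L) (v : nat -> A), quasi_algebraic phi -> sat v phi -> sat (f \o v) phi.

Definition geometrically_closed_in_Mod (L : language) (T : theory L) (A : structure L) : Prop :=
  forall (B : structure L) (f : A -> B), is_model T B -> homomorphism f -> geometrically_closed f.

Definition geometrically_complete (L : language) (T : theory L) : Prop :=
  forall A : structure L, is_model T A -> geometrically_closed_in_Mod T A.

From mathcomp Require Import all_boot.
From mathcomp Require Import boolp filter.
From Stdlib Require List.
Set Implicit Arguments. Unset Strict Implicit. Unset Printing Implicit Defensive.

(* Let f : A -> B be a homomorphism between models of T, hence an immersion.  Suppose A
   satisfies forall ys (/\ Phi -> psi) at v, and w agrees with f \o v outside ys and
   satisfies Phi in B.  Because f reflects positive existential sentences, every finite
   part of the positive diagram of B is realized in A by a map h : B -> A fixing the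
   finitely many relevant parameters v n; the quasi-algebraic sentence then gives psi at
   h \o w.  An ultrapower of A glues these maps into a homomorphism g from B into a model
   of T with psi at g \o w, and g, being an immersion as well, reflects psi back to w. *)

Lemma mem_In (T : eqType) (s : seq T) x : x \in s -> List.In x s.
Proof. by elim: s => //= y s IH; rewrite inE => /orP[/eqP->|/IH]; [left|right]. Qed.

Lemma In_mem (T : eqType) (s : seq T) x : List.In x s -> x \in s.
Proof. by elim: s => //= y s IH [->|/IH]; rewrite inE ?eqxx // => ->; rewrite orbT. Qed.

Lemma In_flatten_map (X Y : Type) (g : X -> seq Y) l x y :
  List.In x l -> List.In y (g x) -> List.In y (flatten (map g l)).
Proof.
move=> Hx Hy; elim: l Hx => //= x' l IH [->|/IH Hl]; apply: List.in_or_app; by [left|right].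
Qed.

Lemma mem_flatten_map (X : Type) (g : X -> seq nat) l x n :
  List.In x l -> n \in g x -> n \in flatten (map g l).
Proof.
move=> Hx Hn; elim: l Hx => //= x' l IH [->|/IH Hl]; by rewrite mem_cat ?Hn ?Hl ?orbT.
Qed.

Definition pindex (X : Type) (cs : seq X) (c : X) : nat := find (fun d => `[< d = c >]) cs.

Lemma pindex_lt (X : Type) (cs : seq X) c : List.In c cs -> pindex cs c < size cs.
Proof.
rewrite /pindex; elim: cs => //= d cs IH [->|/IH]; first by rewrite asboolT.
by case: asboolP.
Qed.

Lemma nth_pindex (X : Type) (x0 : X) cs c : List.In c cs -> nth x0 cs (pindex cs c) = c.
Proof.
rewrite /pindex; elim: cs => //= d cs IH [->|/IH]; first by rewrite asboolT.
by case: asboolP.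
Qed.

Section Syntax.
Variable L : language.

Fixpoint tvars (t : term L) : seq nat :=
  match t with
  | TVar n => [:: n]
  | TApp f args => flatten [seq tvars (args i) | i <- enum 'I_(farity f)]
  end.

Fixpoint trename (s : nat -> nat) (t : term L) : term L :=
  match t with
  | TVar n => TVar L (s n)
  | TApp f args => TApp (fun i => trename s (args i))
  end.

Definition avars (phi : formula L) : seq nat :=
  match phi with
  | FEq t s => tvars t ++ tvars s
  | FRel r args => flatten [seq tvars (args i) | i <- enum 'I_(rarity r)]
  | _ => [::]
  end.

Definition frename (s : nat -> nat) (phi : formula L) : formula L :=
  match phi with
  | FEq t t' => FEq (trename s t) (trename s t')
  | FRel r args => FRel (fun i => trename s (args i))
  | _ => phi
  end.

Definition existss (xs : seq nat) (phi : formula L) : formula L :=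
  foldr (@FExists L) phi xs.

Lemma mem_tvars_args n (args : 'I_n -> term L) i m :
  m \in tvars (args i) -> m \in flatten [seq tvars (args j) | j <- enum 'I_n].
Proof.
by move=> Hm; apply/flattenP; exists (tvars (args i)); rewrite ?map_f ?mem_enum.
Qed.

Lemma frename_atomic s phi : atomic phi -> atomic (frename s phi).
Proof. by case: phi. Qed.

Lemma pos_qf_bigAnd (Phi : seq (formula L)) :
  (forall phi, List.In phi Phi -> atomic phi) -> pos_qf (bigAnd Phi).
Proof.
elim: Phi => [|phi Phi IH] HPhi /=; first exact: pqf_true.
by apply: pqf_and; [apply/pqf_atomic/HPhi; left | apply: IH => psi Hpsi; apply: HPhi; right].
Qed.

Lemma pos_ex_existss xs phi : pos_qf phi -> pos_ex (existss xs phi).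
Proof. by move=> Hphi; elim: xs => [|x xs IH] /=; [apply: pex_qf | apply: pex_ex]. Qed.

End Syntax.

Section Satisfaction.
Variables (L : language) (A : structure L).
Implicit Types (u : nat -> A) (t : term L) (phi : formula L).

Lemma eval_ext u u' t :
  (forall n, n \in tvars t -> u n = u' n) -> eval u t = eval u' t.
Proof.
elim: t => [n|f args IH] Hu /=; first by apply: Hu; rewrite inE.
congr interp_f; apply: funext => i; apply: IH => n Hn; apply: Hu.
exact: mem_tvars_args Hn.
Qed.

Lemma eval_trename u s t : eval u (trename s t) = eval (u \o s) t.
Proof. by elim: t => [n|f args IH] //=; congr interp_f; apply: funext => i. Qed.

Lemma sat_frename u s phi : atomic phi -> sat u (frename s phi) <-> sat (u \o s) phi.
Proof.
case: phi => //= [t t'|r args] _; first by rewrite !eval_trename.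
by under eq_fun do rewrite eval_trename.
Qed.

Lemma sat_avars_ext u u' phi : atomic phi ->
  (forall n, n \in avars phi -> u n = u' n) -> sat u phi <-> sat u' phi.
Proof.
case: phi => //= [t t'|r args] _ Hu.
  by rewrite (@eval_ext u u' t) ?(@eval_ext u u' t') // => n Hn;
     apply: Hu; rewrite mem_cat Hn ?orbT.
suff -> : (fun i => eval u (args i)) = (fun i => eval u' (args i)) by [].
apply: funext => i; apply: eval_ext => n Hn; apply: Hu; exact: mem_tvars_args Hn.
Qed.

Lemma sat_foralls u ys phi :
  sat u (foralls ys phi) <->
  forall u', (forall m, m \notin ys -> u' m = u m) -> sat u' phi.
Proof.
elim: ys u => [|y ys IH] u /=.
  split=> [Hphi u' Hu'|]; last by apply.
  by have -> : u' = u by apply: funext => m; exact: Hu'.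
split=> [Hphi u' Hu'|Hphi a].
  apply: (proj1 (IH _) (Hphi (u' y))) => m Hm; rewrite /upd.
  by case: eqP => [->//|/eqP ne]; apply: Hu'; rewrite inE negb_or ne.
apply/IH => u' Hu'; apply: Hphi => m; rewrite inE negb_or => /andP[ne nm].
by rewrite Hu' // /upd (negbTE ne).
Qed.

Lemma sat_existss u xs phi :
  sat u (existss xs phi) <->
  exists u', (forall m, m \notin xs -> u' m = u m) /\ sat u' phi.
Proof.
elim: xs u => [|x xs IH] u /=.
  split=> [Hphi|[u' [Hu' Hphi]]]; first by exists u.
  by have <- : u' = u by apply: funext => m; exact: Hu'.
split=> [[a /IH [u' [Hu' Hphi]]]|[u' [Hu' Hphi]]].
  exists u'; split=> // m; rewrite inE negb_or => /andP[ne nm].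
  by rewrite Hu' // /upd (negbTE ne).
exists (u' x); apply/IH; exists u'; split=> // m Hm; rewrite /upd.
by case: eqP => [->//|/eqP ne]; apply: Hu'; rewrite inE negb_or ne.
Qed.

Lemma sat_bigAnd u Phi : sat u (bigAnd Phi) <-> forall phi, List.In phi Phi -> sat u phi.
Proof.
elim: Phi => [|psi Phi IH] /=; first by split.
rewrite IH; split=> [[Hpsi HPhi] phi [<-|]|HPhi]; auto.
Qed.

End Satisfaction.

Record is_ultrafilter (I : Type) (U : (I -> Prop) -> Prop) : Prop := {
  ultraT : U (fun _ => True);
  ultraI : forall P Q, U P -> U Q -> U (fun i => P i /\ Q i);
  ultraS : forall P Q : I -> Prop, U P -> (forall i, P i -> Q i) -> U Q;
  ultra0 : ~ U (fun _ => False);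
  ultraC : forall P, U P \/ U (fun i => ~ P i) }.

Lemma ultrafilter_extends (I : Type) (U0 : (I -> Prop) -> Prop) :
  U0 (fun _ => True) ->
  (forall P Q, U0 P -> U0 Q -> U0 (fun i => P i /\ Q i)) ->
  (forall P Q : I -> Prop, U0 P -> (forall i, P i -> Q i) -> U0 Q) ->
  ~ U0 (fun _ => False) ->
  exists U, is_ultrafilter U /\ forall P, U0 P -> U P.
Proof.
move=> U0T U0I U0S U00.
have U0F : ProperFilter U0.
  by constructor=> //; constructor=> // P Q PQ UP; apply: U0S UP _.
have [U [Uu sub]] := ultraFilterLemma U0F.
exists U; split=> //; constructor.
- exact: filterT.
- by move=> P Q; apply: filterI.
- by move=> P Q UP PQ; apply: filterS UP.
- exact: filter_not_empty.
- by move=> P; apply: in_ultra_setVsetC.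
Qed.

Section Ultrafilter.
Variables (I : Type) (U : (I -> Prop) -> Prop) (Uu : is_ultrafilter U).
Implicit Types P Q : I -> Prop.

Lemma ultra_iff_on E P Q : U E -> (forall i, E i -> (P i <-> Q i)) -> U P <-> U Q.
Proof.
by move=> UE PQ; split=> UP; apply: (ultraS Uu (ultraI Uu UE UP)) => i [/PQ ->].
Qed.

Lemma ultra_and P Q : U (fun i => P i /\ Q i) <-> U P /\ U Q.
Proof.
split=> [UPQ|[UP UQ]]; last exact: (ultraI Uu).
by split; apply: (ultraS Uu UPQ) => i [].
Qed.

Lemma ultra_not P : U (fun i => ~ P i) <-> ~ U P.
Proof.
split=> [UnP UP|nUP]; last by case: (ultraC Uu P).
by apply: (ultra0 Uu); apply: (ultraS Uu (ultraI Uu UP UnP)) => i [].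
Qed.

Lemma ultra_or P Q : U (fun i => P i \/ Q i) <-> U P \/ U Q.
Proof.
split=> [UPQ|[] UPQ]; last 2 first.
- by apply: (ultraS Uu UPQ) => i; left.
- by apply: (ultraS Uu UPQ) => i; right.
case: (ultraC Uu P) => [|nUP]; first by left.
by right; apply: (ultraS Uu (ultraI Uu UPQ nUP)) => i [[]].
Qed.

Lemma ultra_imp P Q : U (fun i => P i -> Q i) <-> (U P -> U Q).
Proof.
split=> [UPQ UP|UPQ].
  by apply: (ultraS Uu (ultraI Uu UPQ UP)) => i [].
case: (ultraC Uu P) => [/UPQ UQ|UnP]; [apply: (ultraS Uu UQ) | apply: (ultraS Uu UnP)] => i //.
Qed.

Lemma ultra_ord_forall n (P : 'I_n -> I -> Prop) :
  (forall j, U (P j)) -> U (fun i => forall j, P j i).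
Proof.
move=> UP; suff : U (fun i => forall j, j \in enum 'I_n -> P j i).
  by move=> UP'; apply: (ultraS Uu UP') => i Hi j; apply: Hi; rewrite mem_enum.
elim: (enum 'I_n) => [|j s IH]; first by apply: (ultraS Uu (ultraT Uu)).
apply: (ultraS Uu (ultraI Uu (UP j) IH)) => i [Pj Ps] k.
by rewrite inE => /orP[/eqP->|/Ps].
Qed.

Lemma ultra_exists (X : Type) (P : I -> X -> Prop) :
  U (fun i => exists x, P i x) <-> exists c : I -> X, U (fun i => P i (c i)).
Proof.
split=> [UP|[c]]; last by move=> UP; apply: (ultraS Uu UP) => i; exists (c i).
have [[x0]|nX] := pselect (inhabited X); last first.
  by exfalso; apply: (ultra0 Uu); apply: (ultraS Uu UP) => i [x] _; apply: nX.
have ch i : exists x, (exists x, P i x) -> P i x.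
  by have [[x Px]|nP] := pselect (exists x, P i x); [exists x | exists x0].
exists (fun i => sval (cid (ch i))).
by apply: (ultraS Uu UP) => i; case: (cid (ch i)) => x /= Px /Px.
Qed.

Lemma ultra_forall (X : Type) (P : I -> X -> Prop) :
  U (fun i => forall x, P i x) <-> forall c : I -> X, U (fun i => P i (c i)).
Proof.
split=> [UP c|UP]; first by apply: (ultraS Uu UP).
apply: contrapT => /ultra_not UnP.
have /ultra_exists [c] : U (fun i => exists x, ~ P i x).
  by apply: (ultraS Uu UnP) => i /existsNP.
by move/ultra_not; apply.
Qed.

End Ultrafilter.

Section Ultrapower.
Variables (I : Type) (U : (I -> Prop) -> Prop) (Uu : is_ultrafilter U).
Variables (L : language) (A : structure L).
Implicit Types (r : I -> A) (rs : nat -> I -> A).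

Definition ueq r r' : Prop := U (fun i => r i = r' i).

(* Elements of the ultrapower are the [ueq]-classes, represented as predicates. *)
Definition ultrapower_dom : Type := {P : (I -> A) -> Prop | exists r, P = ueq r}.

Definition ucls r : ultrapower_dom := exist _ (ueq r) (ex_intro _ r erefl).

Definition urepr (d : ultrapower_dom) : I -> A := sval (cid (svalP d)).

Lemma ucls_eq r r' : ucls r = ucls r' <-> ueq r r'.
Proof.
split=> [/(congr1 (fun d => sval d r')) /= ->|Urr']; first exact: (ultraS Uu (ultraT Uu)).
apply: eq_exist; apply: funext => r''; apply: propext.
split=> Ur; apply: (ultraS Uu (ultraI Uu Urr' Ur)) => i [-> //].
Qed.

Lemma urepr_ucls d : ucls (urepr d) = d.
Proof.
rewrite /urepr; case: (cid _) => r /= Pr.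
by case: d Pr => P HP /= Pr; apply: eq_exist.
Qed.

Lemma ueq_urepr r : ueq (urepr (ucls r)) r.
Proof. by apply/ucls_eq; rewrite urepr_ucls. Qed.

Definition ultrapower : structure L :=
  @Structure L ultrapower_dom
    (fun f args => ucls (fun i => interp_f (fun j => urepr (args j) i)))
    (fun R args => U (fun i => interp_r (fun j => urepr (args j) i))).

Lemma forall_ucls (Q : ultrapower -> Prop) : (forall d, Q d) <-> forall r, Q (ucls r).
Proof. by split=> // HQ d; rewrite -(urepr_ucls d). Qed.

Lemma exists_ucls (Q : ultrapower -> Prop) : (exists d, Q d) <-> exists r, Q (ucls r).
Proof. by split=> [[d]|[r]]; [rewrite -(urepr_ucls d); exists (urepr d) | exists (ucls r)]. Qed.

Lemma urepr_args n (rs : 'I_n -> I -> A) :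
  U (fun i => forall j, urepr (ucls (rs j)) i = rs j i).
Proof. by apply: (ultra_ord_forall Uu) => j; apply: ueq_urepr. Qed.

Lemma los_eval rs t :
  eval (A := ultrapower) (fun n => ucls (rs n)) t = ucls (fun i => eval (fun n => rs n i) t).
Proof.
elim: t => [n|f args IH] //=; apply/ucls_eq.
apply: (ultraS Uu (urepr_args (fun j i => eval (fun n => rs n i) (args j)))) => i Hi.
by congr interp_f; apply: funext => j; rewrite IH Hi.
Qed.

Lemma upd_ucls rs x r :
  upd (A := ultrapower) (fun n => ucls (rs n)) x (ucls r) =
  (fun n => ucls (fun i => upd (fun n => rs n i) x (r i) n)).
Proof. by apply: funext => n; rewrite /upd; case: (n == x). Qed.

Theorem los phi rs :
  sat (A := ultrapower) (fun n => ucls (rs n)) phi <-> U (fun i => sat (fun n => rs n i) phi).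
Proof.
elim: phi rs => [||t s|R args|p IH|p IHp q IHq|p IHp q IHq|p IHp q IHq|x p IH|x p IH] rs /=.
- by split=> // _; apply: (ultraT Uu).
- by split=> //; apply: (ultra0 Uu).
- by rewrite !los_eval ucls_eq.
- apply: (ultra_iff_on Uu (urepr_args (fun j i => eval (fun n => rs n i) (args j)))) => i Hi.
  suff -> : (fun j => urepr (eval (A := ultrapower) (fun n => ucls (rs n)) (args j)) i) =
            (fun j => eval (fun n => rs n i) (args j)) by [].
  by apply: funext => j; rewrite los_eval Hi.
- by rewrite IH (ultra_not Uu).
- by rewrite IHp IHq (ultra_and Uu).
- by rewrite IHp IHq (ultra_or Uu).
- by rewrite IHp IHq (ultra_imp Uu).
- rewrite forall_ucls (ultra_forall Uu); split=> Hp r; move: (Hp r); by rewrite upd_ucls IH.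
- rewrite exists_ucls (ultra_exists Uu); split=> -[r Hp]; exists r; move: Hp; by rewrite upd_ucls IH.
Qed.

Lemma ultrapower_model (T : theory L) : is_model T A -> is_model T ultrapower.
Proof.
move=> [[a] HA]; split=> [|phi Tphi u]; first by constructor; exact: ucls (fun _ => a).
have -> : u = (fun n => ucls (urepr (u n))) by apply: funext => n; rewrite urepr_ucls.
by apply/los; apply: (ultraS Uu (ultraT Uu)) => i _; apply: HA.
Qed.

End Ultrapower.

Definition diagram_fact (L : language) (B : structure L) : Type :=
  {x : formula L * (nat -> B) | atomic x.1 /\ sat x.2 x.1}.

Lemma homomorphism_into_ultrapower (L : language) (A B : structure L)
    (w : nat -> B) (chi : formula L) :
  (forall D : seq (diagram_fact B), exists h : B -> A,
     (forall x, List.In x D -> sat (h \o (sval x).2) (sval x).1) /\ sat (h \o w) chi) ->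
  exists U : (seq (diagram_fact B) -> Prop) -> Prop, is_ultrafilter U /\
    exists g : B -> ultrapower U A, homomorphism g /\ sat (g \o w) chi.
Proof.
move=> realized.
pose U0 (S : seq (diagram_fact B) -> Prop) :=
  exists D, forall D', (forall x, List.In x D -> List.In x D') -> S D'.
have [U [Uu U0U]] : exists U, is_ultrafilter U /\ forall S, U0 S -> U S.
  apply: ultrafilter_extends.
  - by exists [::].
  - move=> P Q [D1 HP] [D2 HQ]; exists (D1 ++ D2) => D' sub.
    by split; [apply: HP | apply: HQ] => x Hx; apply/sub/List.in_or_app; [left|right].
  - by move=> P Q [D HP] PQ; exists D => D' /HP /PQ.
  - by move=> [D /(_ D)]; apply.
pose h D := sval (cid (realized D)).
have Hh D : (forall x, List.In x D -> sat (h D \o (sval x).2) (sval x).1) /\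
            sat (h D \o w) chi by rewrite /h; case: (cid _).
exists U; split=> //; exists (fun b => ucls U (fun D => h D b)); split.
- move=> phi u Hat Hphi; apply/(los Uu _ (fun n D => h D (u n))).
  pose x : diagram_fact B := exist _ (phi, u) (conj Hat Hphi).
  apply: (ultraS Uu (U0U (fun D => List.In x D) _)) => [|D /(Hh D).1 //].
  by exists [:: x] => D'; apply; left.
- apply/(los Uu _ (fun n D => h D (w n))).
  by apply: (ultraS Uu (ultraT Uu)) => D _; apply: (Hh D).2.
Qed.

Lemma immersion_finite_retraction (L : language) (A B : structure L) (f : A -> B) :
  immersion f ->
  forall (facts : seq (formula L * (nat -> B))) (v : nat -> A) (vs : seq nat),
  (forall x, List.In x facts -> atomic x.1 /\ sat x.2 x.1) ->
  exists h : B -> A, (forall x, List.In x facts -> sat (h \o x.2) x.1) /\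
                     (forall n, n \in vs -> h (f (v n)) = v n).
Proof.
move=> [_ f_refl] facts v vs Hfacts.
pose cs := flatten [seq map x.2 (avars x.1) | x <- facts] ++ [seq f (v n) | n <- vs].
pose N := size cs.
pose k := pindex cs.
have cs_fact x n : List.In x facts -> n \in avars x.1 -> List.In (x.2 n) cs.
  move=> Hx Hn; apply/List.in_or_app; left.
  by apply: (In_flatten_map (g := fun x => map x.2 (avars x.1)) Hx); apply/List.in_map/mem_In.
have cs_par n : n \in vs -> List.In (f (v n)) cs.
  by move=> Hn; apply/List.in_or_app; right; apply/List.in_map/mem_In.
(* The elements of [cs] become the bound variables [0, ..., N-1], and variable [N + n]
   stands for the parameter [v n]. *)
pose Th := FAnd (bigAnd [seq frename (k \o x.2) x.1 | x <- facts])
                (bigAnd [seq FEq (TVar L (k (f (v n)))) (TVar L (N + n)) | n <- vs]).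
pose vA n := v (n - N).
have posTh : pos_ex (existss (iota 0 N) Th).
  apply/pos_ex_existss/pqf_and; apply: pos_qf_bigAnd => _ /List.in_map_iff [x [<- Hx]] //.
  exact/frename_atomic/(Hfacts x Hx).1.
have inB : sat (f \o vA) (existss (iota 0 N) Th).
  pose wB n := if n < N then nth (f (v 0)) cs n else f (vA n).
  have wBk c : List.In c cs -> wB (k c) = c by move=> Hc; rewrite /wB pindex_lt // nth_pindex.
  apply/sat_existss; exists wB; split=> [m|].
    by rewrite mem_iota add0n leq0n /= /wB => /negbTE ->.
  split; apply/sat_bigAnd => _ /List.in_map_iff [x [<- Hx]].
    have [Hat Hs] := Hfacts x Hx.
    apply/(sat_frename _ _ Hat); apply: (sat_avars_ext Hat _).2 Hs => n Hn.
    exact: wBk (cs_fact _ _ Hx Hn).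
  rewrite /= wBk; last exact/cs_par/In_mem.
  by rewrite /wB /= ltnNge leq_addr /vA addKn.
have [wA [HwA [Hfacts_A Heqs_A]]] := (sat_existss _ _ _).1 (f_refl _ _ posTh inB).
exists (wA \o k); split=> [x Hx|n Hn].
  have := (sat_bigAnd _ _).1 Hfacts_A _ (List.in_map (fun x => frename (k \o x.2) x.1) _ _ Hx).
  by move/(sat_frename _ _ (Hfacts x Hx).1).
have /= -> := (sat_bigAnd _ _).1 Heqs_A _ (List.in_map _ _ _ (mem_In Hn)).
by rewrite HwA /vA ?addKn // mem_iota add0n ltnNge leq_addr.
Qed.

Lemma quasi_algebraic_finite_realization (L : language) (A B : structure L) (f : A -> B)
    (ys : seq nat) (Phi : seq (formula L)) (psi : formula L) (v : nat -> A) (w : nat -> B) :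
  immersion f -> (forall phi, List.In phi Phi -> atomic phi) -> atomic psi ->
  sat v (foralls ys (FImp (bigAnd Phi) psi)) ->
  (forall m, m \notin ys -> w m = f (v m)) -> sat w (bigAnd Phi) ->
  forall D : seq (diagram_fact B), exists h : B -> A,
    (forall x, List.In x D -> sat (h \o (sval x).2) (sval x).1) /\ sat (h \o w) psi.
Proof.
move=> imm_f Phi_atomic psi_atomic Hv Hw HwPhi D.
pose vs := flatten [seq avars phi | phi <- psi :: Phi].
pose facts := map sval D ++ [seq (phi, w) | phi <- Phi].
have facts_true x : List.In x facts -> atomic x.1 /\ sat x.2 x.1.
  move=> Hx; have [] := List.in_app_or _ _ _ Hx => /List.in_map_iff [y [<- Hy]].
    exact: (svalP y).
  by split; [apply: Phi_atomic | apply: (proj1 (sat_bigAnd _ _) HwPhi)].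
have [h [Hh h_fix]] := immersion_finite_retraction imm_f v vs facts_true.
pose z n := if n \in ys then h (w n) else v n.
have z_hw phi : List.In phi (psi :: Phi) -> forall n, n \in avars phi -> z n = h (w n).
  move=> Hphi n Hn; rewrite /z; case: ifP => // /negbT Hys.
  by rewrite Hw // h_fix //; apply: (mem_flatten_map Hphi).
have z_Phi : sat z (bigAnd Phi).
  apply/sat_bigAnd => phi Hphi; have Hat := Phi_atomic _ Hphi.
  apply: (sat_avars_ext Hat (z_hw _ (or_intror Hphi))).2.
  by apply: (Hh (phi, w)); apply/List.in_or_app; right; apply: List.in_map.
have z_off m : m \notin ys -> z m = v m by rewrite /z => /negbTE ->.
have z_psi : sat z psi := proj1 (sat_foralls _ _ _) Hv z z_off z_Phi.
exists h; split; last exact: (sat_avars_ext psi_atomic (z_hw _ (or_introl erefl))).1.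
by move=> x Hx; apply: Hh; apply/List.in_or_app; left; apply: List.in_map.
Qed.

Lemma foldr_atomic_In (L : language) (Phi : seq (formula L)) :
  foldr (fun chi P => atomic chi /\ P) True Phi -> forall phi, List.In phi Phi -> atomic phi.
Proof. by elim: Phi => //= psi Phi IH [Hpsi /IH HPhi] phi [<-|/HPhi]. Qed.

Theorem theorem4p6 (L : language) (T : theory L) :
  positively_model_complete T -> geometrically_complete T.
Proof.
move=> pmc A HA B f HB hf; split=> // _ v [ys [Phi [psi [HPhi Hpsi ->]]]] Hv.
apply/sat_foralls => w Hw HwPhi.
have [U [Uu [g [hg Hgw]]]] := homomorphism_into_ultrapower
  (quasi_algebraic_finite_realization (pmc _ _ _ HA HB hf) (foldr_atomic_In HPhi) Hpsi Hv Hw HwPhi).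
have [_ g_refl] := pmc _ _ g HB (ultrapower_model Uu HA) hg.
exact: g_refl _ _ (pex_qf (pqf_atomic Hpsi)) Hgw.
Qed.
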